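(* Let $n\ge2$ and let $\mathsf r$ be a cyclic factorization of $\lambda_n$. Then there exists $\mathsf u\in\mathcal S_n$ such that $\mathsf r=\mathsf r^{\mathsf u}$.
   Context: $\widetilde S_n$ is the group, under composition $(vw)(k)=v(w(k))$, of bijections $w:\mathbb Z\to\mathbb Z$ with $w(i+n)=w(i)+n$ and $\sum_{i=1}^n w(i)=\binom{n+1}2$. For $i\not\equiv j\pmod n$, $(\!(i,j)\!)$ swaps $i+kn$ and $j+kn$ for all $k$; $(\!(i,j)\!)=(\!(j,i)\!)=(\!(i+kn,j+kn)\!)$; $s_i=(\!(i,i+1)\!)$, $i\in\{0,\dots,n-1\}$. ''$i\bmod n$'' is the representative in $\{1,\dots,n\}$. $\lambda_n(k)=k+n$ for $k\not\equiv0\pmod n$, $\lambda_n(k)=k-n(n-1)$ for $k\equiv0\pmod n$; its reflection length is $2n-2$; $\textsc{fact}(\lambda_n)$ is the set of sequences of $2n-2$ reflections with product $\lambda_n$. Such $[r_1,\dots,r_{2n-2}]$ is tree-like if one can write $r_i=(\!(a_{i-1},b_i)\!)$ with integers $a_{i-1}<b_i$ and $a_i\equiv b_i\pmod n$ ($1\le i\le 2n-3$). For $k\in[n]$, $N_{\mathsf r}(k)$ is the list, in increasing order of $i$, of $b_i\bmod n$ over all $i$ with $a_{i-1}\equiv k\pmod n$. A tree-like $\mathsf r$ is cyclic if (i) $N_{\mathsf r}(n)$ is strictly increasing and (ii) for each $1\le k<n$, writing $N_{\mathsf r}(k)=[c_1,\dots,c_\ell]$, there is $1\le j\le \ell$ with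 $c_j<\dots<c_{\ell-1}<k<c_1<\dots<c_{j-1}$. $\bm\lambda_n$ is the word $[s_0,\dots,s_{n-1}]$ repeated $n-1$ times with $j$-th letter $\sigma_j=s_{(j-1)\bmod n}$ (index in $\{0,\dots,n-1\}$). A subword is $\mathsf u=[u_1,\dots,u_{n(n-1)}]$ with $u_j\in\{\sigma_j,e\}$; $j$ is a skip if $u_j=e$. $u_{(j)}=u_1\cdots u_j$, $u_{(0)}=e$. $\mathcal S_n$ is the set of subwords with exactly $2n-2$ skips and product $e$. $\textsc{inv}(\mathsf u)=[t_1,\dots,t_{n(n-1)}]$, $t_j=u_{(j-1)}\sigma_ju_{(j-1)}^{-1}$; $\mathsf r^{\mathsf u}$ is the subsequence of the $t_j$ at skips, in increasing order. *)

(* affine permutations as functions Z -> Z. *)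
From Stdlib Require Import ZArith List Lia Sorting.Sorted.
Import ListNotations.
Open Scope Z_scope.

Definition NZ (n : nat) : Z := Z.of_nat n.

Definition congrb (n : nat) (a b : Z) : bool := Z.eqb ((a - b) mod NZ n) 0.

(* "k mod n": the representative in {1,...,n} *)
Definition modrep (n : nat) (k : Z) : Z := ((k - 1) mod NZ n) + 1.

Definition feq (f g : Z -> Z) : Prop := forall k, f k = g k.

(* ((i,j)) : swaps i+kn and j+kn for all k (meaningful when i, j not congruent) *)
Definition refl (n : nat) (i j : Z) : Z -> Z := fun k =>
  if congrb n k i then k - i + j
  else if congrb n k j then k - j + i
  else k.

Definition is_reflection (n : nat) (f : Z -> Z) : Prop :=
  exists i j : Z, congrb n i j = false /\ feq f (refl n i j).

(* product under composition: [r1;...;rm] |-> r1 o r2 o ... o rm *)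
Definition prod (l : list (Z -> Z)) : Z -> Z :=
  fold_right (fun f g => fun k => f (g k)) (fun k => k) l.

Definition lambda (n : nat) (k : Z) : Z :=
  if Z.eqb (k mod NZ n) 0 then k - NZ n * (NZ n - 1) else k + NZ n.

Definition is_fact (n : nat) (r : list (Z -> Z)) : Prop :=
  length r = (2 * n - 2)%nat /\ Forall (is_reflection n) r /\ feq (prod r) (lambda n).

(* a, b witness tree-likeness of r: r_i = ((a_{i-1}, b_i)), a_{i-1} < b_i,
   a_{i-1} not congruent to b_i (so the reflection notation makes sense),
   and a_i == b_i mod n for 1 <= i <= 2n-3.  Indices: a : 0..2n-3, b : 1..2n-2. *)
Definition tree_witness (n : nat) (r : list (Z -> Z)) (a b : nat -> Z) : Prop :=
  (forall i : nat, (1 <= i <= 2 * n - 2)%nat ->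
     congrb n (a (i - 1)%nat) (b i) = false /\ a (i - 1)%nat < b i /\
     feq (nth (i - 1) r (fun k => k)) (refl n (a (i - 1)%nat) (b i))) /\
  (forall i : nat, (1 <= i <= 2 * n - 3)%nat -> congrb n (a i) (b i) = true).

Definition tree_like (n : nat) (r : list (Z -> Z)) : Prop :=
  exists a b, tree_witness n r a b.

Definition Nlist (n : nat) (a b : nat -> Z) (k : Z) : list Z :=
  map (fun i => modrep n (b i))
      (filter (fun i => congrb n (a (i - 1)%nat) k) (seq 1 (2 * n - 2))).

(* condition (ii) for a given k and list [c_1,...,c_l]:
   exists 1 <= j <= l with c_j < ... < c_{l-1} < k < c_1 < ... < c_{j-1} *)
Definition cyc_cond (k : Z) (s : list Z) : Prop :=
  exists j : nat, (1 <= j <= length s)%nat /\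
    Sorted Z.lt (firstn (length s - j) (skipn (j - 1) s) ++ [k] ++ firstn (j - 1) s).

Definition cyclic (n : nat) (r : list (Z -> Z)) : Prop :=
  exists a b, tree_witness n r a b /\
    Sorted Z.lt (Nlist n a b (NZ n)) /\
    (forall k : Z, 1 <= k < NZ n -> cyc_cond k (Nlist n a b k)).

Definition simple (n : nat) (i : nat) : Z -> Z := refl n (Z.of_nat i) (Z.of_nat i + 1).

Definition sigma (n : nat) (j : nat) : Z -> Z := simple n ((j - 1) mod n)%nat.

(* a subword u of bold-lambda_n is encoded by its skip flags
   (true at position j, 1-based, iff u_j = e) *)
Definition letter (n : nat) (u : list bool) (j : nat) : Z -> Z :=
  if nth (j - 1) u false then (fun k => k) else sigma n j.

Definition letters (n : nat) (u : list bool) : list (Z -> Z) :=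
  map (letter n u) (seq 1 (n * (n - 1))).

Definition uprefix (n : nat) (u : list bool) (j : nat) : Z -> Z :=
  prod (firstn j (letters n u)).

(* u_(j)^{-1} = u_j^{-1} ... u_1^{-1} = u_j ... u_1  (each letter is e or an s_i,
   which are involutions) *)
Definition uprefix_inv (n : nat) (u : list bool) (j : nat) : Z -> Z :=
  prod (rev (firstn j (letters n u))).

Definition tinv (n : nat) (u : list bool) (j : nat) : Z -> Z :=
  fun k => uprefix n u (j - 1) (sigma n j (uprefix_inv n u (j - 1) k)).

Definition in_Sn (n : nat) (u : list bool) : Prop :=
  length u = (n * (n - 1))%nat /\
  length (filter (fun x => x) u) = (2 * n - 2)%nat /\
  feq (prod (letters n u)) (fun k => k).

Definition r_of (n : nat) (u : list bool) : list (Z -> Z) :=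
  map (tinv n u) (filter (fun j => nth (j - 1) u false) (seq 1 (n * (n - 1)))).

From Stdlib Require Import ZArith List Lia Sorting.Sorted.
Import ListNotations.
Open Scope Z_scope.

(* Write r_(c+1) = ((a_c, b_(c+1))) and lift the path a_0, b_1 ≡ a_1, b_2 ≡ a_2, ... to an
   increasing walk in Z.  For the prefix products P_c = r_1 ⋯ r_c the displacement P_c z - z
   depends only on z mod n.  The number of classes with positive displacement, plus the number
   with displacement at least n, rises from 0 to 2n - 2 in 2n - 2 steps of at most one, so every
   step is a rise; together with the cyclic condition on the lists N_r(k) this makes the
   reflections P_c r_(c+1) P_c^-1 = ((a_0, a_0 + y_c)) have strictly increasing y_c, with
   1 <= y_c <= n^2 - 1 and y_c ≢ 0 (mod n).  Such a reflection is the inversion of the word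
   [bold λ_n] at a unique position, increasing in y; skipping exactly these 2n - 2 positions
   gives u.  Between consecutive skips u_(j) = P_c^-1 σ_1 ⋯ σ_j, hence the inversion of u at
   the (c+1)-th skip is r_(c+1), and the product of u is P_(2n-2)^-1 λ_n = e. *)

Lemma firstn_succ {A} (l : list A) c d : (c < length l)%nat ->
  firstn (S c) l = firstn c l ++ [nth c l d].
Proof.
  revert c; induction l as [|x l IH]; intros c Hc; simpl in *; [lia|].
  destruct c; simpl; auto. f_equal. apply IH. lia.
Qed.

Lemma Forall_firstn {A} (P : A -> Prop) c l : Forall P l -> Forall P (firstn c l).
Proof. rewrite <- (firstn_skipn c l) at 1. intros H. apply Forall_app in H. tauto. Qed.

Lemma nth_map_seq {A} (f : nat -> A) j s len d : (j < len)%nat ->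
  nth j (map f (seq s len)) d = f (s + j)%nat.
Proof.
  intros Hj. rewrite (nth_indep _ d (f 0%nat)) by (rewrite length_map, length_seq; lia).
  rewrite map_nth, seq_nth by lia. reflexivity.
Qed.

Lemma lt_chain (f : nat -> Z) k : (forall c, (S c < k)%nat -> f c < f (S c)) ->
  forall c1 c2, (c1 < c2 < k)%nat -> f c1 < f c2.
Proof.
  intros H c1 c2 [H12 H2]. induction H12 as [|c2 H12 IH]; [apply H; lia|].
  pose proof (H c2 ltac:(lia)). specialize (IH ltac:(lia)). lia.
Qed.

Lemma map_nth_seq_self {A} (l : list A) d : l = map (fun i => nth i l d) (seq 0 (length l)).
Proof.
  apply (nth_ext _ _ d d); [rewrite length_map, length_seq; reflexivity|].
  intros i Hi. rewrite nth_map_seq by exact Hi. reflexivity.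
Qed.

Lemma Forall2_map_seq {A B} (R : A -> B -> Prop) f g s len :
  (forall i, (s <= i < s + len)%nat -> R (f i) (g i)) ->
  Forall2 R (map f (seq s len)) (map g (seq s len)).
Proof.
  revert s; induction len as [|len IH]; intros s H; simpl; constructor.
  - apply H. lia.
  - apply IH. intros i Hi. apply H. lia.
Qed.

Lemma filter_seq_consecutive (p : nat -> bool) s len x y :
  (s <= x < y)%nat -> (y < s + len)%nat -> p x = true -> p y = true ->
  (forall z, (x < z < y)%nat -> p z = false) ->
  filter p (seq s len) =
  filter p (seq s (x - s)) ++ x :: y :: filter p (seq (S y) (s + len - S y)).
Proof.
  intros Hxy Hy Px Py Hbetween.
  replace len with ((x - s) + (1 + ((y - x - 1) + (1 + (s + len - S y)))))%nat at 1 by lia.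
  rewrite !seq_app, !filter_app. simpl.
  replace (s + (x - s))%nat with x by lia. rewrite Px.
  replace (x + 1 + (y - x - 1))%nat with y by lia. rewrite Py.
  replace (filter p (seq (x + 1) (y - x - 1))) with (@nil nat).
  - replace (y + 1)%nat with (S y) by lia. reflexivity.
  - rewrite (filter_ext_in _ (fun _ => false)), filter_false; [reflexivity|].
    intros z Hz. apply in_seq in Hz. apply Hbetween. lia.
Qed.

Lemma sorted_map_seq (f : nat -> nat) s len :
  (forall i j, (s <= i < j /\ j < s + len)%nat -> (f i < f j)%nat) ->
  StronglySorted Nat.lt (map f (seq s len)).
Proof.
  revert s; induction len as [|len IH]; intros s H; simpl; constructor.
  - apply IH. intros i j Hij. apply H. lia.
  - apply Forall_forall. intros x Hx. apply in_map_iff in Hx as [i [<- Hi]].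
    apply in_seq in Hi. apply H. lia.
Qed.

Lemma filter_seq_mem (l : list nat) s len : StronglySorted Nat.lt l ->
  (forall t, In t l -> (s <= t < s + len)%nat) ->
  filter (fun j => existsb (Nat.eqb j) l) (seq s len) = l.
Proof.
  revert s l; induction len as [|len IH]; intros s l Hl Hrange.
  - destruct l as [|t l]; auto. specialize (Hrange t (or_introl eq_refl)). lia.
  - simpl. destruct (existsb (Nat.eqb s) l) eqn:Hs.
    + apply existsb_exists in Hs as [x [Hx Hsx]]. apply Nat.eqb_eq in Hsx. subst x.
      destruct l as [|t l]; [inversion Hx|]. inversion Hl as [|? ? Hl' Ht]; subst.
      rewrite Forall_forall in Ht.
      assert (t = s).
      { destruct Hx as [Hx|Hx]; auto. specialize (Ht s Hx).
        specialize (Hrange t (or_introl eq_refl)). lia. }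
      subst t. f_equal. rewrite (filter_ext_in _ (fun j => existsb (Nat.eqb j) l)).
      * apply IH; auto. intros t Hin. specialize (Hrange t (or_intror Hin)).
        specialize (Ht t Hin). lia.
      * intros j Hj. apply in_seq in Hj. simpl. rewrite (proj2 (Nat.eqb_neq j s)) by lia. auto.
    + apply IH; auto. intros t Hin. specialize (Hrange t Hin).
      destruct (Nat.eq_dec t s); [subst|lia].
      assert (existsb (Nat.eqb s) l = true)
        by (apply existsb_exists; exists s; auto using Nat.eqb_refl).
      congruence.
Qed.

Lemma sorted_nth_lt (l : list Z) i j : StronglySorted Z.lt l -> (i < j < length l)%nat ->
  nth i l 0 < nth j l 0.
Proof.
  revert i j; induction l as [|x l IH]; intros i j Hl Hij; simpl in *; [lia|].
  inversion Hl as [|? ? Hl' Hx]; subst. destruct i, j; try lia.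
  - rewrite Forall_forall in Hx. apply Hx, nth_In. lia.
  - apply IH; auto. lia.
Qed.

Lemma rotation_nth (s : list Z) k J : (1 <= J <= length s)%nat ->
  let R := firstn (length s - J) (skipn (J - 1) s) ++ [k] ++ firstn (J - 1) s in
  length R = length s /\
  (forall i, (i < length s - J)%nat -> nth i R 0 = nth (J - 1 + i) s 0) /\
  nth (length s - J) R 0 = k /\
  (forall i, (length s - J < i < length s)%nat -> nth i R 0 = nth (i - (length s - J) - 1) s 0).
Proof.
  intros HJ R.
  assert (L1 : length (firstn (length s - J) (skipn (J - 1) s)) = (length s - J)%nat)
    by (rewrite length_firstn, length_skipn; lia).
  assert (L2 : length (firstn (J - 1) s) = (J - 1)%nat) by (rewrite length_firstn; lia).
  split; [unfold R; rewrite !length_app; simpl; lia|].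
  split; [|split].
  - intros i Hi. unfold R. rewrite app_nth1 by lia.
    rewrite nth_firstn, (proj2 (Nat.ltb_lt _ _)), nth_skipn by lia. reflexivity.
  - unfold R. rewrite app_nth2 by lia. rewrite L1, Nat.sub_diag. reflexivity.
  - intros i Hi. unfold R. rewrite app_nth2 by lia. rewrite L1.
    replace (i - (length s - J))%nat with (S (i - (length s - J) - 1)) by lia. simpl.
    rewrite nth_firstn, (proj2 (Nat.ltb_lt _ _)), Nat.sub_0_r by lia. reflexivity.
Qed.

(* Only the last entry [c_l] of [N_r(k)] is unconstrained by [cyc_cond], hence [B <> []]. *)
Lemma cyc_cond_consecutive k A x y B : B <> [] -> cyc_cond k (A ++ x :: y :: B) ->
  x < y < k \/ y < k < x \/ k < x < y.
Proof.
  intros HB [J [HJ HR]].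
  set (s := A ++ x :: y :: B) in *.
  assert (Hl : length s = (length A + 2 + length B)%nat)
    by (unfold s; rewrite length_app; simpl; lia).
  assert (HB1 : (1 <= length B)%nat) by (destruct B; [congruence|simpl; lia]).
  assert (Hx : nth (length A) s 0 = x)
    by (unfold s; rewrite app_nth2, Nat.sub_diag by lia; reflexivity).
  assert (Hy : nth (S (length A)) s 0 = y)
    by (unfold s; rewrite app_nth2, Nat.sub_succ_l, Nat.sub_diag by lia; reflexivity).
  apply Sorted_StronglySorted in HR; [|intros ? ? ?; lia].
  destruct (rotation_nth s k J HJ) as [HRl [Hfst [Hk Hsnd]]].
  set (R := firstn _ _ ++ _ ++ _) in *.
  pose proof (fun i j => sorted_nth_lt R i j HR) as Hlt.
  destruct (Nat.le_gt_cases (J - 1) (length A)) as [C|C];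
    [|destruct (Nat.eq_dec (J - 1) (S (length A))) as [C'|C']].
  - pose proof (Hlt (length A - (J - 1)) (S (length A) - (J - 1)))%nat.
    pose proof (Hlt (S (length A) - (J - 1)) (length s - J))%nat.
    rewrite (Hfst (length A - (J - 1)))%nat, (Hfst (S (length A) - (J - 1)))%nat, Hk in * by lia.
    replace (J - 1 + (length A - (J - 1)))%nat with (length A) in * by lia.
    replace (J - 1 + (S (length A) - (J - 1)))%nat with (S (length A)) in * by lia. lia.
  - pose proof (Hlt 0 (length s - J))%nat. pose proof (Hlt (length s - J) (length s - 1))%nat.
    rewrite (Hfst 0%nat), (Hsnd (length s - 1)%nat), Hk in * by lia.
    replace (J - 1 + 0)%nat with (S (length A)) in * by lia.
    replace (length s - 1 - (length s - J) - 1)%nat with (length A) in * by lia. lia.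
  - pose proof (Hlt (length s - J) (length s - J + length A + 1))%nat.
    pose proof (Hlt (length s - J + length A + 1) (length s - J + length A + 2))%nat.
    rewrite (Hsnd (length s - J + length A + 1)%nat), (Hsnd (length s - J + length A + 2)%nat), Hk
      in * by lia.
    replace (length s - J + length A + 1 - (length s - J) - 1)%nat with (length A) in * by lia.
    replace (length s - J + length A + 2 - (length s - J) - 1)%nat with (S (length A)) in * by lia.
    lia.
Qed.

Section AffinePermutations.
Variable n : nat.
Hypothesis n_ge2 : (2 <= n)%nat.
Local Notation nz := (NZ n).
Local Notation lam_len := (n * (n - 1))%nat.

Lemma nz_ge2 : 2 <= nz.
Proof. unfold NZ. lia. Qed.

Lemma nz_neq0 : nz <> 0.
Proof. pose proof nz_ge2; lia. Qed.

Lemma lam_len_Z : Z.of_nat lam_len = nz * (nz - 1).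
Proof. unfold NZ. rewrite Nat2Z.inj_mul, Nat2Z.inj_sub by lia. simpl. lia. Qed.

Definition cl (x : Z) : Z := x mod nz.

Lemma cl_eq_iff x y : cl x = cl y <-> exists t, x = y + t * nz.
Proof.
  unfold cl. split.
  - intros H. pose proof (Z.div_mod x nz nz_neq0). pose proof (Z.div_mod y nz nz_neq0).
    exists (x / nz - y / nz). lia.
  - intros [t ->]. apply Z.mod_add, nz_neq0.
Qed.

Lemma cl_eq_shift x y t : x = y + t * nz -> cl x = cl y.
Proof. intros H. apply cl_eq_iff. eauto. Qed.

Lemma cl_add_mul x t : cl (x + t * nz) = cl x.
Proof. apply (cl_eq_shift _ _ t). reflexivity. Qed.

Lemma cl_add x y : cl (x + y) = cl (cl x + y).
Proof. unfold cl. rewrite Z.add_mod_idemp_l; auto using nz_neq0. Qed.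

Lemma cl_bound x : 0 <= cl x < nz.
Proof. apply Z.mod_pos_bound. pose proof nz_ge2; lia. Qed.

Lemma cl_small x : 0 <= x < nz -> cl x = x.
Proof. apply Z.mod_small. Qed.

Lemma cl_decomp x : x = cl x + (x / nz) * nz.
Proof. pose proof (Z.div_mod x nz nz_neq0). unfold cl. lia. Qed.

Lemma congrb_cl x y : congrb n x y = (cl x =? cl y).
Proof.
  unfold congrb. rewrite <- (cl_small 0) by (pose proof nz_ge2; lia). fold (cl (x - y)).
  destruct (Z.eqb_spec (cl (x - y)) (cl 0)) as [H|H];
    destruct (Z.eqb_spec (cl x) (cl y)) as [H'|H']; auto; exfalso.
  - apply H'. apply cl_eq_iff in H as [t Ht]. apply (cl_eq_shift _ _ t). lia.
  - apply H. apply cl_eq_iff in H' as [t Ht]. apply (cl_eq_shift _ _ t). lia.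
Qed.

Lemma cl_sub_eq0 x y : cl (x - y) = 0 <-> cl x = cl y.
Proof.
  rewrite <- (cl_small 0) at 1 by (pose proof nz_ge2; lia).
  split; intros H; apply cl_eq_iff in H as [t Ht]; apply (cl_eq_shift _ _ t); lia.
Qed.

Lemma cl_pred y : cl y <> 0 -> cl (y - 1) = cl y - 1.
Proof.
  intros H. pose proof (cl_decomp y). pose proof (cl_bound y).
  rewrite (cl_eq_shift _ (cl y - 1) (y / nz)) by lia. apply cl_small. lia.
Qed.

Lemma cl_window lo x y : cl x = cl y -> lo <= x < lo + nz -> lo <= y < lo + nz -> x = y.
Proof.
  intros H Hx Hy. apply cl_eq_iff in H as [t Ht]. pose proof nz_ge2.
  destruct (Z.lt_trichotomy t 0) as [T|[T|T]]; [nia|subst; lia|nia].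
Qed.

Lemma cl_succ_neq i : cl i <> cl (i + 1).
Proof.
  intros E. apply cl_eq_iff in E as [t Ht]. pose proof nz_ge2.
  destruct (Z.lt_trichotomy t 0) as [T|[T|T]]; nia.
Qed.

Lemma cl_nat_mod j : cl (Z.of_nat (j mod n)) = cl (Z.of_nat j).
Proof.
  apply (cl_eq_shift _ _ (- Z.of_nat (j / n))).
  pose proof (Nat.div_mod j n ltac:(lia)). unfold NZ. lia.
Qed.

Lemma modrep_spec v : cl (modrep n v) = cl v /\ 1 <= modrep n v <= nz.
Proof.
  unfold modrep. fold (cl (v - 1)). pose proof (cl_bound (v - 1)). split; [|lia].
  pose proof (cl_decomp (v - 1)). symmetry. apply (cl_eq_shift _ _ ((v - 1) / nz)). lia.
Qed.

Lemma refl_spec i j k : cl i <> cl j ->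
  (cl k = cl i /\ refl n i j k = k - i + j) \/
  (cl k = cl j /\ refl n i j k = k - j + i) \/
  (cl k <> cl i /\ cl k <> cl j /\ refl n i j k = k).
Proof.
  intros Hij. unfold refl. rewrite !congrb_cl.
  destruct (Z.eqb_spec (cl k) (cl i)); [left; auto|].
  destruct (Z.eqb_spec (cl k) (cl j)); [right; left; auto|]. right; right; auto.
Qed.

Definition equivariant (f : Z -> Z) : Prop := forall k t, f (k + t * nz) = f k + t * nz.

Definition involution (f : Z -> Z) : Prop := forall k, f (f k) = k.

Lemma refl_equivariant i j : equivariant (refl n i j).
Proof.
  intros k t. unfold refl. rewrite !congrb_cl, !cl_add_mul.
  destruct (cl k =? cl i); [lia|]. destruct (cl k =? cl j); lia.
Qed.

Lemma refl_involution i j : cl i <> cl j -> involution (refl n i j).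
Proof.
  intros Hij k.
  destruct (refl_spec i j k Hij) as [[H1 ->]|[[H1 ->]|[_ [_ E]]]]; [| |rewrite !E; reflexivity];
    apply cl_eq_iff in H1 as [t Ht].
  - destruct (refl_spec i j (k - i + j) Hij) as [[G1 _]|[[_ ->]|[_ [G2 _]]]]; [|lia|];
      exfalso; [apply Hij; rewrite <- G1|apply G2]; apply (cl_eq_shift _ _ t); lia.
  - destruct (refl_spec i j (k - j + i) Hij) as [[_ ->]|[[G1 _]|[G2 _]]]; [lia| |];
      exfalso; [apply Hij; rewrite <- G1; symmetry|apply G2]; apply (cl_eq_shift _ _ t); lia.
Qed.

Lemma refl_translate i j i' j' k : cl i' = cl i -> j' - i' = j - i ->
  refl n i' j' k = refl n i j k.
Proof.
  intros H1 H2. apply cl_eq_iff in H1 as [t Ht]. unfold refl. rewrite !congrb_cl.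
  rewrite (cl_eq_shift i' i t), (cl_eq_shift j' j t) by lia.
  destruct (cl k =? cl i); [lia|]. destruct (cl k =? cl j); lia.
Qed.

Lemma refl_conj f g x y : equivariant f -> (forall z, f (g z) = z) -> (forall z, g (f z) = z) ->
  cl x <> cl y -> forall k, f (refl n x y (g k)) = refl n (f x) (f y) k.
Proof.
  intros Hf Hfg Hgf Hxy k.
  assert (Hcl : forall z w, cl (f z) = cl (f w) <-> cl z = cl w).
  { intros z w. rewrite !cl_eq_iff. split; intros [t Ht]; exists t.
    - rewrite <- Hf in Ht. apply (f_equal g) in Ht. rewrite !Hgf in Ht. exact Ht.
    - rewrite Ht. apply Hf. }
  assert (Hfxy : cl (f x) <> cl (f y)) by (rewrite Hcl; exact Hxy).
  rewrite <- (Hfg k) at 2. set (z := g k).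
  destruct (refl_spec x y z Hxy) as [[A1 ->]|[[A1 ->]|[A1 [A2 ->]]]].
  - apply cl_eq_iff in A1 as [t Ht].
    replace (z - x + y) with (y + t * nz) by lia. rewrite Ht, !Hf.
    destruct (refl_spec (f x) (f y) (f x + t * nz) Hfxy) as [[_ ->]|[[B1 _]|[B1 _]]]; [lia| |];
      exfalso; rewrite cl_add_mul in B1; [apply Hfxy|]; auto.
  - apply cl_eq_iff in A1 as [t Ht].
    replace (z - y + x) with (x + t * nz) by lia. rewrite Ht, !Hf.
    destruct (refl_spec (f x) (f y) (f y + t * nz) Hfxy) as [[B1 _]|[[_ ->]|[_ [B1 _]]]]; [|lia|];
      exfalso; rewrite cl_add_mul in B1; [apply Hfxy|]; auto.
  - rewrite <- Hcl in A1, A2.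
    destruct (refl_spec (f x) (f y) (f z) Hfxy) as [[B1 _]|[[B1 _]|[_ [_ ->]]]]; tauto.
Qed.

Lemma prod_app l1 l2 k : prod (l1 ++ l2) k = prod l1 (prod l2 k).
Proof. induction l1 as [|f l1 IH]; simpl; auto. unfold prod in *; simpl. rewrite IH. auto. Qed.

Lemma prod_equivariant l : Forall equivariant l -> equivariant (prod l).
Proof.
  induction 1 as [|f l Hf Hl IH]; intros k t; simpl; [reflexivity|].
  change (f (prod l (k + t * nz)) = f (prod l k) + t * nz). rewrite IH, Hf. reflexivity.
Qed.

Lemma prod_rev_inverse l : Forall involution l ->
  forall k, prod (rev l) (prod l k) = k /\ prod l (prod (rev l) k) = k.
Proof.
  induction 1 as [|f l Hf Hl IH]; intros k; simpl; [split; reflexivity|].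
  rewrite !prod_app. change (prod [f] ?x) with (f x).
  change (prod (f :: l) ?x) with (f (prod l x)). split.
  - rewrite Hf. apply IH.
  - rewrite (proj2 (IH (f k))). apply Hf.
Qed.

Lemma sigma_S j x : sigma n (S j) x = refl n (Z.of_nat (j mod n)) (Z.of_nat (j mod n) + 1) x.
Proof. unfold sigma, simple. rewrite Nat.sub_succ, Nat.sub_0_r. reflexivity. Qed.

Lemma sigma_equivariant j : equivariant (sigma n j).
Proof. apply refl_equivariant. Qed.

Lemma sigma_involution j : involution (sigma n (S j)).
Proof. intros k. rewrite !sigma_S. apply refl_involution, cl_succ_neq. Qed.

Definition lam_prefix (j : nat) : Z -> Z := prod (map (sigma n) (seq 1 j)).

Definition lam_prefix_formula (j x : Z) : Z :=
  if cl (x - j) =? 0 then x - j else x + (j + cl (x - j - 1)) / (nz - 1).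

Lemma lam_prefix_S j k : lam_prefix (S j) k = lam_prefix j (sigma n (S j) k).
Proof.
  unfold lam_prefix. rewrite seq_S, map_app, prod_app.
  replace (1 + j)%nat with (S j) by lia. reflexivity.
Qed.

Lemma lam_prefix_formula_S j x :
  lam_prefix_formula (Z.of_nat j + 1) x = lam_prefix_formula (Z.of_nat j) (sigma n (S j) x).
Proof.
  rewrite sigma_S. set (i := Z.of_nat (j mod n)). set (J := Z.of_nat j).
  pose proof (cl_nat_mod j) as Hi. fold i J in Hi. pose proof nz_ge2.
  destruct (refl_spec i (i + 1) x (cl_succ_neq i)) as [[A1 ->]|[[A1 ->]|[A1 [A2 ->]]]];
    unfold lam_prefix_formula.
  - rewrite Hi in A1. apply cl_eq_iff in A1 as [t Ht].
    rewrite (cl_eq_shift (x - (J + 1)) (nz - 1) (t - 1)),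
      (cl_eq_shift (x - i + (i + 1) - J) 1 t), (cl_eq_shift (x - (J + 1) - 1) (nz - 2) (t - 1)),
      (cl_eq_shift (x - i + (i + 1) - J - 1) 0 t), !cl_small by lia.
    destruct (Z.eqb_spec (nz - 1) 0); [lia|]. destruct (Z.eqb_spec 1 0); [lia|].
    replace (J + 1 + (nz - 2)) with (J + 1 * (nz - 1)) by lia.
    rewrite Z.div_add, Z.add_0_r by lia. lia.
  - apply cl_eq_iff in A1 as [t Ht]. apply cl_eq_iff in Hi as [t' Ht'].
    rewrite (cl_eq_shift (x - (J + 1)) 0 (t + t')), (cl_eq_shift (x - (i + 1) + i - J) 0 (t + t')),
      cl_small by lia. simpl. lia.
  - assert (B1 : cl (x - J) <> 0) by (rewrite cl_sub_eq0, <- Hi; auto).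
    assert (B2 : cl (x - (J + 1)) <> 0).
    { rewrite cl_sub_eq0. intros E. apply A2. rewrite E.
      apply cl_eq_iff in Hi as [t' Ht']. apply (cl_eq_shift _ _ (- t')). lia. }
    destruct (Z.eqb_spec (cl (x - J)) 0); [tauto|].
    destruct (Z.eqb_spec (cl (x - (J + 1))) 0); [tauto|].
    replace (x - J - 1) with (x - (J + 1)) by lia.
    rewrite cl_pred by auto. do 2 f_equal. lia.
Qed.

Lemma lam_prefix_formula_0 x : lam_prefix_formula 0 x = x.
Proof.
  unfold lam_prefix_formula. rewrite !Z.sub_0_r.
  destruct (Z.eqb_spec (cl x) 0); auto.
  rewrite cl_pred by auto. pose proof (cl_bound x). pose proof nz_ge2.
  rewrite Z.div_small; lia.
Qed.

Lemma lam_prefix_closed j x : lam_prefix j x = lam_prefix_formula (Z.of_nat j) x.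
Proof.
  revert x; induction j as [|j IH]; intros x.
  - apply eq_sym, lam_prefix_formula_0.
  - rewrite lam_prefix_S, IH, <- lam_prefix_formula_S. f_equal. lia.
Qed.

Lemma lam_prefix_formula_diag J : lam_prefix_formula J J = 0.
Proof.
  unfold lam_prefix_formula. rewrite Z.sub_diag, cl_small by (pose proof nz_ge2; lia).
  reflexivity.
Qed.

Lemma lam_prefix_formula_succ J : lam_prefix_formula J (J + 1) = J + 1 + J / (nz - 1).
Proof.
  pose proof nz_ge2. unfold lam_prefix_formula.
  replace (J + 1 - J) with 1 by lia. replace (1 - 1) with 0 by lia.
  rewrite !cl_small by lia. simpl. rewrite Z.add_0_r. lia.
Qed.

Lemma lam_prefix_formula_full x : lam_prefix_formula (nz * (nz - 1)) x = lambda n x.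
Proof.
  unfold lam_prefix_formula, lambda. fold (cl x). pose proof nz_ge2.
  rewrite (cl_eq_shift (x - nz * (nz - 1)) x (- (nz - 1))) by lia.
  destruct (Z.eqb_spec (cl x) 0) as [E|E]; auto.
  rewrite (cl_eq_shift (x - nz * (nz - 1) - 1) (x - 1) (- (nz - 1))) by lia.
  rewrite cl_pred by auto. pose proof (cl_bound x).
  rewrite Z.div_add_l, (Z.div_small (cl x - 1)) by lia. lia.
Qed.

Lemma lam_prefix_equivariant j : equivariant (lam_prefix j).
Proof.
  apply prod_equivariant, Forall_forall. intros f Hf.
  apply in_map_iff in Hf as [i [<- _]]. apply sigma_equivariant.
Qed.

(* By [lam_prefix_formula_diag] and [lam_prefix_formula_succ], the inversion [t_(J+1)] of
   the full word [bold λ_n] is ((0, J + 1 + J / (n-1))); every y ≢ 0 in [1, n^2 - 1] is hit. *)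
Definition inversion_position (y : Z) : Z := y - y / nz - 1.

Lemma inversion_position_spec y : 1 <= y <= nz * nz - 1 -> cl y <> 0 ->
  let J := inversion_position y in 0 <= J <= nz * (nz - 1) - 1 /\ J + 1 + J / (nz - 1) = y.
Proof.
  intros Hy Hy0 J. pose proof nz_ge2. pose proof (cl_decomp y). pose proof (cl_bound y).
  set (q := y / nz) in *.
  assert (0 <= q <= nz - 1).
  { split; [apply Z.div_pos; lia|].
    apply Z.lt_succ_r, Z.div_lt_upper_bound; lia. }
  assert (HJ : J = q * (nz - 1) + (cl y - 1)) by (unfold J, inversion_position; lia).
  assert (J / (nz - 1) = q) by (rewrite HJ, Z.div_add_l, Z.div_small by lia; lia).
  split; [split|]; nia.
Qed.

Lemma inversion_mono j1 j2 : 0 <= j1 <= j2 ->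
  j1 + 1 + j1 / (nz - 1) <= j2 + 1 + j2 / (nz - 1).
Proof. intros. pose proof nz_ge2. pose proof (Z.div_le_mono j1 j2 (nz - 1)). lia. Qed.

Definition sumL (f : Z -> Z) (l : list Z) : Z := fold_right (fun z acc => f z + acc) 0 l.

Lemma sumL_ext f g l : (forall z, In z l -> f z = g z) -> sumL f l = sumL g l.
Proof.
  induction l as [|z l IH]; intros H; simpl; auto.
  rewrite H by (left; reflexivity). rewrite IH by (intros; apply H; right; auto). reflexivity.
Qed.

Lemma sumL_lin f g p q al be l : (forall z, In z l -> f z = g z + al * p z + be * q z) ->
  sumL f l = sumL g l + al * sumL p l + be * sumL q l.
Proof.
  induction l as [|z l IH]; intros H; simpl; [lia|].
  rewrite H by (left; reflexivity). rewrite IH by (intros; apply H; right; auto). ring.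
Qed.

Lemma sumL_const k l : sumL (fun _ => k) l = k * Z.of_nat (length l).
Proof. induction l as [|z l IH]; simpl; lia. Qed.

Lemma sumL_indicator w s len : sumL (fun z => if z =? w then 1 else 0) (map Z.of_nat (seq s len)) =
  if andb (Z.of_nat s <=? w) (w <? Z.of_nat (s + len)) then 1 else 0.
Proof.
  revert s; induction len as [|len IH]; intros s; simpl sumL; [|rewrite IH];
    destruct (Z.of_nat s =? w) eqn:E1; destruct (Z.of_nat s <=? w) eqn:E2;
    destruct (w <? Z.of_nat (s + _)) eqn:E3;
    try destruct (Z.of_nat (S s) <=? w) eqn:E4; try destruct (w <? Z.of_nat (S s + len)) eqn:E5;
    simpl; rewrite ?Z.eqb_eq, ?Z.eqb_neq, ?Z.leb_le, ?Z.leb_gt, ?Z.ltb_lt, ?Z.ltb_ge in *; lia.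
Qed.

Definition residues : list Z := map Z.of_nat (seq 0 n).

Lemma residues_length : Z.of_nat (length residues) = nz.
Proof. unfold residues. rewrite length_map, length_seq. reflexivity. Qed.

Lemma sumL_residues_cl v : sumL (fun z => if cl z =? cl v then 1 else 0) residues = 1.
Proof.
  rewrite (sumL_ext _ (fun z => if z =? cl v then 1 else 0)).
  - unfold residues. rewrite sumL_indicator. pose proof (cl_bound v). unfold NZ in *.
    rewrite (proj2 (Z.leb_le _ _)), (proj2 (Z.ltb_lt _ _)) by lia. reflexivity.
  - intros z Hz. unfold residues in Hz. apply in_map_iff in Hz as [i [<- Hi]].
    apply in_seq in Hi. rewrite cl_small by (unfold NZ; lia). reflexivity.
Qed.

Lemma letters_length u : length (letters n u) = lam_len.
Proof. unfold letters. rewrite length_map, length_seq. reflexivity. Qed.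

Lemma letters_nth u j : (j < lam_len)%nat -> nth j (letters n u) (fun k => k) = letter n u (S j).
Proof. intros Hj. unfold letters. rewrite nth_map_seq by exact Hj. reflexivity. Qed.

Lemma letters_equivariant_involution u :
  Forall (fun f => equivariant f /\ involution f) (letters n u).
Proof.
  apply Forall_forall. intros f Hf. unfold letters in Hf. apply in_map_iff in Hf as [x [<- Hx]].
  apply in_seq in Hx. unfold letter. destruct (nth (x - 1) u false).
  - split; intros k; reflexivity.
  - replace x with (S (x - 1)) by lia. split; [apply sigma_equivariant|apply sigma_involution].
Qed.

Lemma uprefix_S u j k : (j < lam_len)%nat ->
  uprefix n u (S j) k = uprefix n u j (letter n u (S j) k).
Proof.
  intros Hj. unfold uprefix.
  rewrite (firstn_succ _ _ (fun k => k)), prod_app, letters_nth by (rewrite ?letters_length; auto).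
  reflexivity.
Qed.

Lemma uprefix_inverse u j k :
  uprefix n u j (uprefix_inv n u j k) = k /\ uprefix_inv n u j (uprefix n u j k) = k.
Proof.
  unfold uprefix, uprefix_inv. apply and_comm, prod_rev_inverse.
  eapply Forall_impl, Forall_firstn, letters_equivariant_involution. intros f Hf; apply Hf.
Qed.

Lemma uprefix_equivariant u j : equivariant (uprefix n u j).
Proof.
  apply prod_equivariant.
  eapply Forall_impl, Forall_firstn, letters_equivariant_involution. intros f Hf; apply Hf.
Qed.

Section CyclicFactorization.
Variable r : list (Z -> Z).
Variables a b : nat -> Z.
Hypothesis r_length : length r = (2 * n - 2)%nat.
Hypothesis r_product : feq (prod r) (lambda n).
Hypothesis r_tree : tree_witness n r a b.
Hypothesis N_top_sorted : Sorted Z.lt (Nlist n a b nz).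
Hypothesis N_cyclic : forall k, 1 <= k < nz -> cyc_cond k (Nlist n a b k).

Local Notation m := (2 * n - 2)%nat.

Lemma step_spec c : (c < m)%nat -> cl (a c) <> cl (b (S c)) /\ a c < b (S c) /\
  feq (nth c r (fun k => k)) (refl n (a c) (b (S c))).
Proof.
  intros Hc. destruct r_tree as [H _]. specialize (H (S c)).
  rewrite Nat.sub_succ, Nat.sub_0_r, congrb_cl in H.
  destruct H as [H1 H2]; [lia|]. split; auto. intros E. rewrite E, Z.eqb_refl in H1. discriminate.
Qed.

Lemma step_link c : (1 <= c < m)%nat -> cl (a c) = cl (b c).
Proof.
  intros Hc. destruct r_tree as [_ H]. apply Z.eqb_eq. rewrite <- congrb_cl. apply H. lia.
Qed.

Definition width (c : nat) : Z := b (S c) - a c.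

(* The path a_0, b_1 ≡ a_1, b_2 ≡ a_2, ... lifted to Z. *)
Fixpoint walk (c : nat) : Z :=
  match c with O => a O | S c' => walk c' + width c' end.

Definition pre (c : nat) : Z -> Z := prod (firstn c r).
Definition pre_inv (c : nat) : Z -> Z := prod (rev (firstn c r)).

Lemma width_pos c : (c < m)%nat -> 1 <= width c.
Proof. intros Hc. destruct (step_spec c Hc) as [_ [H _]]. unfold width. lia. Qed.

Lemma walk_cl c : (c < m)%nat -> cl (walk c) = cl (a c).
Proof.
  induction c as [|c IH]; intros Hc; simpl; auto.
  rewrite step_link by lia. unfold width. rewrite cl_add, IH, <- cl_add by lia. f_equal. lia.
Qed.

Lemma walk_S_cl c : (c < m)%nat -> cl (walk (S c)) = cl (b (S c)).
Proof. intros Hc. simpl. unfold width. rewrite cl_add, walk_cl, <- cl_add by lia. f_equal. lia. Qed.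

Lemma walk_ge c : (c <= m)%nat -> walk c >= a 0 + Z.of_nat c.
Proof. induction c as [|c IH]; intros Hc; simpl; [lia|]. pose proof (width_pos c). lia. Qed.

Lemma r_equivariant_involution : Forall (fun f => equivariant f /\ involution f) r.
Proof.
  apply Forall_nth. intros c d Hc. rewrite r_length in Hc.
  destruct (step_spec c Hc) as [Hab [_ Hr]]. rewrite (nth_indep _ d (fun k => k)) by lia.
  split; intros k; rewrite ?Hr; [intros t; rewrite !Hr; apply refl_equivariant|].
  apply refl_involution, Hab.
Qed.

Lemma pre_equivariant c : equivariant (pre c).
Proof.
  apply prod_equivariant. eapply Forall_impl, Forall_firstn, r_equivariant_involution.
  intros f Hf; apply Hf.
Qed.

Lemma pre_inv_equivariant c : equivariant (pre_inv c).
Proof.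
  apply prod_equivariant, Forall_rev. eapply Forall_impl, Forall_firstn, r_equivariant_involution.
  intros f Hf; apply Hf.
Qed.

Lemma pre_inverse c k : pre_inv c (pre c k) = k /\ pre c (pre_inv c k) = k.
Proof.
  apply prod_rev_inverse. eapply Forall_impl, Forall_firstn, r_equivariant_involution.
  intros f Hf; apply Hf.
Qed.

Lemma pre_S c k : (c < m)%nat -> pre (S c) k = pre c (refl n (a c) (b (S c)) k).
Proof.
  intros Hc. unfold pre. rewrite (firstn_succ _ _ (fun k => k)), prod_app by lia.
  apply (f_equal (pre c)), (step_spec c Hc).
Qed.

Lemma pre_inv_S c k : (c < m)%nat -> pre_inv (S c) k = nth c r (fun k => k) (pre_inv c k).
Proof.
  intros Hc. unfold pre_inv. rewrite (firstn_succ _ _ (fun k => k)), rev_app_distr by lia.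
  reflexivity.
Qed.

Lemma pre_full k : pre m k = lambda n k.
Proof. unfold pre. rewrite firstn_all2 by lia. apply r_product. Qed.

Lemma pre_walk c : (c <= m)%nat -> pre c (walk c) = a 0.
Proof.
  induction c as [|c IH]; intros Hc; [reflexivity|].
  rewrite pre_S, <- IH by lia. f_equal. destruct (step_spec c ltac:(lia)) as [Hab _].
  destruct (refl_spec (a c) (b (S c)) (walk (S c)) Hab) as [[A _]|[[_ ->]|[_ [A _]]]].
  - rewrite walk_S_cl in A by lia. congruence.
  - simpl. unfold width. lia.
  - rewrite walk_S_cl in A by lia. congruence.
Qed.

Definition disp (c : nat) (z : Z) : Z := pre c z - z.

Lemma disp_cl c z z' : cl z = cl z' -> disp c z = disp c z'.
Proof. intros H. apply cl_eq_iff in H as [t ->]. unfold disp. rewrite pre_equivariant. lia. Qed.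

Lemma disp_S_at_a c z : (c < m)%nat -> cl z = cl (a c) -> disp (S c) z = disp c (b (S c)) + width c.
Proof.
  intros Hc H. destruct (step_spec c Hc) as [Hab _]. unfold disp. rewrite pre_S by auto.
  destruct (refl_spec (a c) (b (S c)) z Hab) as [[_ ->]|[[A _]|[A _]]]; try congruence.
  apply cl_eq_iff in H as [t ->].
  replace (a c + t * nz - a c + b (S c)) with (b (S c) + t * nz) by lia.
  rewrite pre_equivariant. unfold width. lia.
Qed.

Lemma disp_S_other c z : (c < m)%nat -> cl z <> cl (a c) -> cl z <> cl (b (S c)) ->
  disp (S c) z = disp c z.
Proof.
  intros Hc H1 H2. destruct (step_spec c Hc) as [Hab _]. unfold disp. rewrite pre_S by auto.
  destruct (refl_spec (a c) (b (S c)) z Hab) as [[A _]|[[A _]|[_ [_ ->]]]]; congruence.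
Qed.

Lemma disp_walk c : (c <= m)%nat -> disp c (walk c) = a 0 - walk c.
Proof. intros Hc. unfold disp. rewrite pre_walk; auto. Qed.

Lemma disp_full z : disp m z = if cl z =? 0 then - nz * (nz - 1) else nz.
Proof. unfold disp. rewrite pre_full. unfold lambda. fold (cl z). destruct (cl z =? 0); lia. Qed.

Lemma disp_nonneg c z : (c <= m)%nat -> cl z <> cl (walk c) -> 0 <= disp c z.
Proof.
  revert z; induction c as [|c IH]; intros z Hc Hz; [unfold disp, pre; simpl; lia|].
  rewrite walk_S_cl in Hz by lia.
  destruct (Z.eq_dec (cl z) (cl (a c))) as [E|E].
  - rewrite disp_S_at_a by (auto; lia). pose proof (width_pos c ltac:(lia)).
    enough (0 <= disp c (b (S c))) by lia. apply IH; [lia|].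
    rewrite walk_cl by lia. apply not_eq_sym, step_spec. lia.
  - rewrite disp_S_other by (auto; lia). apply IH; [lia|]. rewrite walk_cl by lia. auto.
Qed.

Lemma walk_full : cl (walk m) = 0 /\ walk m - a 0 = nz * (nz - 1) /\ cl (a 0) = 0.
Proof.
  pose proof (disp_walk m (le_n _)) as H. pose proof (walk_ge m (le_n _)). rewrite disp_full in H.
  destruct (Z.eqb_spec (cl (walk m)) 0) as [E|E]; [|pose proof nz_ge2; lia].
  split; [|split]; auto; [lia|]. rewrite <- E. apply (cl_eq_shift _ _ (- (nz - 1))). lia.
Qed.

Lemma disp_le c z : (c <= m)%nat -> cl z <> cl (walk c) -> disp c z <= nz.
Proof.
  intros Hc. remember (m - c)%nat as k eqn:Hk. revert c z Hc Hk.
  induction k as [|k IH]; intros c z Hc Hk Hz.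
  - replace c with m in * by lia. rewrite disp_full.
    destruct (Z.eqb_spec (cl z) 0); [pose proof nz_ge2; nia|lia].
  - assert (Hcm : (c < m)%nat) by lia. rewrite walk_cl in Hz by auto.
    destruct (step_spec c Hcm) as [Hab _].
    destruct (Z.eq_dec (cl z) (cl (b (S c)))) as [E|E].
    + rewrite (disp_cl c z (b (S c))) by auto.
      pose proof (disp_S_at_a c (a c) Hcm eq_refl). pose proof (width_pos c Hcm).
      enough (disp (S c) (a c) <= nz) by lia.
      apply IH; [lia|lia|]. rewrite walk_S_cl by auto. auto.
    + rewrite <- disp_S_other by auto. apply IH; [lia|lia|]. rewrite walk_S_cl by auto. auto.
Qed.

Definition height (c : nat) : Z := disp c (b (S c)).

Lemma height_bounds c : (c < m)%nat ->
  0 <= height c /\ height c + width c <= nz /\ width c <= nz - 1.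
Proof.
  intros Hc. destruct (step_spec c Hc) as [Hab _].
  assert (0 <= height c).
  { apply disp_nonneg; [lia|]. rewrite walk_cl by auto. auto. }
  assert (height c + width c <= nz).
  { unfold height. rewrite <- (disp_S_at_a c (a c) Hc eq_refl).
    apply disp_le; [lia|]. rewrite walk_S_cl by auto. auto. }
  assert (width c <> nz).
  { intros E. apply Hab, (cl_eq_shift _ _ (-1)). unfold width in E. lia. }
  lia.
Qed.

Definition level (v : Z) : Z := if v <=? 0 then 0 else if v <? nz then 1 else 2.

Definition potential (c : nat) : Z := sumL (fun z => level (disp c z)) residues.

Lemma potential_S c : (c < m)%nat ->
  potential (S c) = potential c + level (height c + width c) - level (height c).
Proof.
  intros Hc. destruct (step_spec c Hc) as [Hab _]. unfold potential.
  rewrite (sumL_lin _ (fun z => level (disp c z)) (fun z => if cl z =? cl (a c) then 1 else 0)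
           (fun z => if cl z =? cl (b (S c)) then 1 else 0) (level (height c + width c))
           (- level (height c))), !sumL_residues_cl; [lia|].
  intros z _. pose proof (walk_ge c ltac:(lia)). pose proof (walk_ge (S c) ltac:(lia)).
  destruct (Z.eqb_spec (cl z) (cl (a c))) as [E1|E1];
    [destruct (Z.eqb_spec (cl z) (cl (b (S c)))) as [E2|E2]; [congruence|]|
     destruct (Z.eqb_spec (cl z) (cl (b (S c)))) as [E2|E2]].
  - rewrite disp_S_at_a, (disp_cl c z (walk c)), disp_walk by (rewrite ?walk_cl; auto; lia).
    unfold level at 2. rewrite (proj2 (Z.leb_le _ _)) by lia. fold (height c). lia.
  - rewrite (disp_cl (S c) z (walk (S c))), disp_walk, (disp_cl c z (b (S c)))
      by (rewrite ?walk_S_cl; auto; lia).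
    unfold level at 1. rewrite (proj2 (Z.leb_le _ _)) by lia. fold (height c). lia.
  - rewrite disp_S_other by auto. lia.
Qed.

Lemma potential_0 : potential 0 = 0.
Proof.
  unfold potential. rewrite (sumL_ext _ (fun _ => 0)), sumL_const; [lia|].
  intros z _. unfold disp, pre. simpl. rewrite Z.sub_diag. reflexivity.
Qed.

Lemma potential_full : potential m = Z.of_nat m.
Proof.
  unfold potential. pose proof nz_ge2.
  rewrite (sumL_lin _ (fun _ => 2) (fun z => if cl z =? cl 0 then 1 else 0) (fun _ => 0) (-2) 0).
  - rewrite sumL_residues_cl, sumL_const, residues_length. unfold NZ. lia.
  - intros z _. rewrite disp_full, (cl_small 0) by lia. unfold level.
    destruct (Z.eqb_spec (cl z) 0).
    + rewrite (proj2 (Z.leb_le _ _)) by nia. lia.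
    + rewrite (proj2 (Z.leb_gt _ _)), Z.ltb_irrefl by lia. lia.
Qed.

Lemma level_step c : (c < m)%nat -> level (height c + width c) - level (height c) <= 1 /\
  (level (height c + width c) - level (height c) = 1 -> height c = 0 \/ height c + width c = nz).
Proof.
  intros Hc. pose proof (height_bounds c Hc). pose proof (width_pos c Hc). unfold level.
  destruct (Z.leb_spec (height c + width c) 0); [lia|].
  destruct (Z.ltb_spec (height c + width c) nz);
    destruct (Z.leb_spec (height c) 0); try destruct (Z.ltb_spec (height c) nz); lia.
Qed.

Lemma potential_growth c1 c2 : (c1 <= c2 <= m)%nat ->
  potential c2 <= potential c1 + Z.of_nat (c2 - c1).
Proof.
  intros [H12 H2]. induction H12 as [|c2 H12 IH]; [lia|].
  rewrite potential_S by lia. pose proof (level_step c2 ltac:(lia)).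
  specialize (IH ltac:(lia)). lia.
Qed.

(* The potential rises from 0 to [m] in [m] steps of at most one, so every step is a rise. *)
Lemma height_dichotomy c : (c < m)%nat -> height c = 0 \/ height c + width c = nz.
Proof.
  intros Hc. apply (proj2 (level_step c Hc)).
  pose proof (level_step c Hc). pose proof (potential_growth 0 c ltac:(lia)).
  pose proof (potential_growth (S c) m ltac:(lia)).
  rewrite potential_0, potential_full, potential_S in * by lia. lia.
Qed.

Definition avoids (j : Z) (i : nat) : Prop := cl (a i) <> cl j /\ cl (b (S i)) <> cl j.

Lemma disp_avoiding j c k : (c + k <= m)%nat -> (forall i, (c <= i < c + k)%nat -> avoids j i) ->
  disp (c + k) j = disp c j.
Proof.
  induction k as [|k IH]; intros Hk H; [rewrite Nat.add_0_r; reflexivity|].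
  rewrite Nat.add_succ_r. destruct (H (c + k)%nat ltac:(lia)) as [N1 N2].
  rewrite disp_S_other by (auto; lia). apply IH; [lia|]. intros; apply H; lia.
Qed.

Lemma last_touch j c : (forall i, (i < c)%nat -> avoids j i) \/
  (exists i, (i < c)%nat /\ ~ avoids j i /\ forall i', (i < i' < c)%nat -> avoids j i').
Proof.
  induction c as [|c IH]; [left; intros; lia|].
  assert (Hdec : avoids j c \/ ~ avoids j c).
  { unfold avoids. destruct (Z.eq_dec (cl (a c)) (cl j)); [tauto|].
    destruct (Z.eq_dec (cl (b (S c))) (cl j)); tauto. }
  destruct Hdec as [Y|Y]; [|right; exists c; split; [lia|split; auto]; intros; lia].
  destruct IH as [IH|[i [Hi [Hni Hafter]]]].
  - left. intros i Hi. destruct (Nat.eq_dec i c); [subst; auto|apply IH; lia].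
  - right. exists i. split; [lia|split; auto]. intros i' Hi'.
    destruct (Nat.eq_dec i' c); [subst; auto|apply Hafter; lia].
Qed.

Lemma b_last_cl : cl (b m) = 0.
Proof.
  destruct walk_full as [H _]. replace m with (S (m - 1)) in H |- * by lia.
  rewrite walk_S_cl in H by lia. exact H.
Qed.

Lemma modrep_b c k : (c < m)%nat -> cl (a c) = cl k -> 1 <= k <= nz ->
  modrep n (b (S c)) = if k + width c <=? nz then k + width c else k + width c - nz.
Proof.
  intros Hc Hk Hk'. pose proof (height_bounds c Hc). pose proof (width_pos c Hc).
  destruct (modrep_spec (b (S c))) as [M1 M2].
  assert (E : cl (modrep n (b (S c))) = cl (k + width c)).
  { rewrite M1. unfold width. rewrite (cl_add k), <- Hk, <- cl_add. f_equal. lia. }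
  destruct (Z.leb_spec (k + width c) nz); apply (cl_window 1); try lia.
  rewrite E. apply (cl_eq_shift _ _ 1). lia.
Qed.

Lemma Nlist_consecutive k i c : (i < c < m)%nat -> cl (a i) = cl k -> cl (a c) = cl k ->
  (forall z, (i < z < c)%nat -> cl (a z) <> cl k) ->
  exists A B, Nlist n a b k = A ++ modrep n (b (S i)) :: modrep n (b (S c)) :: B /\
    ((exists z, (c < z < m)%nat /\ cl (a z) = cl k) -> B <> []).
Proof.
  intros Hic Hi Hc Hbetween.
  set (p := fun z => congrb n (a (z - 1)) k).
  assert (Hp : forall z, p (S z) = true <-> cl (a z) = cl k).
  { intros z. unfold p. rewrite congrb_cl, Nat.sub_succ, Nat.sub_0_r. apply Z.eqb_eq. }
  set (B := filter p (seq (S (S c)) (1 + m - S (S c)))).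
  exists (map (fun z => modrep n (b z)) (filter p (seq 1 (S i - 1)))),
    (map (fun z => modrep n (b z)) B). split.
  - unfold Nlist. fold p. rewrite (filter_seq_consecutive p 1 m (S i) (S c)), map_app.
    + reflexivity.
    + lia.
    + lia.
    + apply Hp, Hi.
    + apply Hp, Hc.
    + intros z Hz. destruct (p z) eqn:E; [exfalso|reflexivity].
      replace z with (S (z - 1)) in E by lia. apply Hp in E.
      apply (Hbetween (z - 1)%nat); [lia|exact E].
  - intros [z [Hz Hzk]] HB. apply map_eq_nil in HB.
    assert (Hin : In (S z) B) by (apply filter_In; split; [apply in_seq; lia|apply Hp, Hzk]).
    rewrite HB in Hin. contradiction.
Qed.

Lemma width_lt_next_departure i c : (i < c < m)%nat -> cl (a i) = cl (a c) ->
  (forall z, (i < z < c)%nat -> cl (a z) <> cl (a c)) ->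
  (cl (a c) <> 0 -> exists z, (c < z < m)%nat /\ cl (a z) = cl (a c)) ->
  width i < width c.
Proof.
  intros Hic Hi Hbetween Hlater.
  destruct (modrep_spec (a c)) as [Hk Hk']. set (k := modrep n (a c)) in *.
  rewrite <- Hk in Hi, Hbetween, Hlater.
  destruct (Nlist_consecutive k i c Hic Hi (eq_sym Hk) Hbetween) as [A [B [HN HB]]].
  rewrite (modrep_b i k), (modrep_b c k) in HN by (auto; lia).
  pose proof (height_bounds i ltac:(lia)). pose proof (height_bounds c ltac:(lia)).
  pose proof (width_pos i ltac:(lia)). pose proof (width_pos c ltac:(lia)).
  destruct (Z.eq_dec k nz) as [Ek|Ek].
  - rewrite Ek in HN. apply Sorted_StronglySorted in N_top_sorted; [|intros ? ? ?; lia].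
    rewrite HN in N_top_sorted.
    pose proof (sorted_nth_lt _ (length A) (S (length A)) N_top_sorted) as Hlt.
    rewrite !app_nth2, Nat.sub_diag, Nat.sub_succ_l, Nat.sub_diag, length_app in Hlt by lia.
    simpl in Hlt. specialize (Hlt ltac:(lia)).
    destruct (Z.leb_spec (nz + width i) nz); destruct (Z.leb_spec (nz + width c) nz); lia.
  - assert (Hk0 : cl k <> 0).
    { intros E. apply Ek, (cl_window 1 k nz); try lia.
      rewrite E, (cl_eq_shift nz 0 1), cl_small by lia. reflexivity. }
    pose proof (N_cyclic k ltac:(lia)) as Hcyc. rewrite HN in Hcyc.
    apply cyc_cond_consecutive in Hcyc; [|apply HB, Hlater, Hk0].
    destruct (Z.leb_spec (k + width i) nz); destruct (Z.leb_spec (k + width c) nz); lia.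
Qed.

Lemma later_departure c : (c < m)%nat -> cl (a c) <> 0 -> height c + width c <> nz ->
  exists z, (c < z < m)%nat /\ cl (a z) = cl (a c).
Proof.
  intros Hc Hj Hh.
  destruct (last_touch (a c) m) as [H|[i [Hi [Hni Hafter]]]].
  { exfalso. destruct (H c Hc). auto. }
  destruct (Nat.le_gt_cases i c) as [Hic|Hic].
  - exfalso. apply Hh.
    pose proof (disp_avoiding (a c) (S c) (m - S c) ltac:(lia)) as Hd.
    replace (S c + (m - S c))%nat with m in Hd by lia.
    rewrite disp_full, disp_S_at_a in Hd by (auto; lia).
    destruct (Z.eqb_spec (cl (a c)) 0); [tauto|]. unfold height. rewrite Hd; [lia|].
    intros i' Hi'. apply Hafter. lia.
  - destruct (Z.eq_dec (cl (a i)) (cl (a c))) as [E|E]; [exists i; auto|].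
    destruct (Z.eq_dec (cl (b (S i))) (cl (a c))) as [Eb|Eb]; [|exfalso; apply Hni; split; auto].
    destruct (Nat.eq_dec (S i) m) as [Em|Em].
    + rewrite Em, b_last_cl in Eb. congruence.
    + exists (S i). split; [lia|]. rewrite step_link by lia. exact Eb.
Qed.

Lemma height_lt c : (S c < m)%nat -> height c < width (S c) + height (S c).
Proof.
  intros Hc.
  pose proof (height_bounds c ltac:(lia)). pose proof (height_bounds (S c) Hc).
  pose proof (width_pos c ltac:(lia)). pose proof (width_pos (S c) Hc).
  destruct (height_dichotomy c ltac:(lia)) as [Hc0|Hfull]; [lia|].
  destruct (height_dichotomy (S c) Hc) as [HSc0|HSc]; [|lia].
  destruct (step_spec c ltac:(lia)) as [Hab _].
  set (j := a (S c)).
  assert (Hbj : cl (b (S c)) = cl j) by (symmetry; apply step_link; lia).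
  assert (Hhc : height c = disp c j) by (apply disp_cl; exact Hbj).
  destruct (last_touch j c) as [None|[i [Hi [Hni Hafter]]]].
  - exfalso. pose proof (disp_avoiding j 0 c ltac:(lia) (fun i Hi => None i ltac:(lia))) as Hd.
    simpl in Hd. rewrite Hd in Hhc. unfold disp, pre in Hhc. simpl in Hhc. lia.
  - assert (Hdep : cl (a i) = cl j).
    { destruct (Z.eq_dec (cl (a i)) (cl j)) as [E|E]; [exact E|exfalso].
      destruct (Z.eq_dec (cl (b (S i))) (cl j)) as [Eb|Eb]; [|apply Hni; split; auto].
      rewrite <- step_link in Eb by lia.
      destruct (Nat.eq_dec (S i) c) as [Ec|Ec]; [subst c; congruence|].
      exact (proj1 (Hafter (S i) ltac:(lia)) Eb). }
    assert (Hhi : height c = height i + width i).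
    { rewrite Hhc. replace c with (S i + (c - S i))%nat at 1 by lia.
      rewrite disp_avoiding by (try lia; intros; apply Hafter; lia).
      apply disp_S_at_a; [lia|symmetry; exact Hdep]. }
    pose proof (height_bounds i ltac:(lia)).
    destruct (height_dichotomy i ltac:(lia)) as [Hi0|Hi0]; [|lia].
    enough (width i < width (S c)) by lia.
    apply width_lt_next_departure; [lia|exact Hdep| |].
    + intros z Hz. fold j. destruct (Nat.eq_dec z c) as [->|Hzc]; [congruence|apply Hafter; lia].
    + intros Hj0. apply later_departure; [lia|exact Hj0|lia].
Qed.

(* [pre c] conjugates [r_(c+1)] to ((a_0, a_0 + offset c)), a reflection of the word [bold λ_n]. *)
Definition offset (c : nat) : Z := pre c (walk (S c)) - a 0.

Lemma offset_height c : (c < m)%nat -> offset c = walk (S c) - a 0 + height c.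
Proof.
  intros Hc. unfold offset, height.
  rewrite (disp_cl c (b (S c)) (walk (S c))) by (rewrite walk_S_cl; auto). unfold disp. lia.
Qed.

Lemma offset_lt c : (S c < m)%nat -> offset c < offset (S c).
Proof.
  intros Hc. rewrite !offset_height by lia. pose proof (height_lt c Hc). simpl in *. lia.
Qed.

Lemma offset_range c : (c < m)%nat -> 1 <= offset c <= nz * nz - 1.
Proof.
  intros Hc. pose proof (lt_chain offset m offset_lt) as Hmono.
  assert (1 <= offset 0).
  { rewrite offset_height by lia. pose proof (height_bounds 0 ltac:(lia)).
    pose proof (width_pos 0 ltac:(lia)). simpl. lia. }
  assert (offset (m - 1) <= nz * nz - 1).
  { rewrite offset_height by lia. replace (S (m - 1)) with m by lia.
    destruct walk_full as [_ [Hw _]]. pose proof (height_bounds (m - 1) ltac:(lia)).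
    pose proof (width_pos (m - 1) ltac:(lia)). lia. }
  assert (offset 0 <= offset c)
    by (destruct (Nat.eq_dec c 0) as [->|]; [lia|apply Z.lt_le_incl, Hmono; lia]).
  assert (offset c <= offset (m - 1))
    by (destruct (Nat.eq_dec c (m - 1)) as [->|]; [lia|apply Z.lt_le_incl, Hmono; lia]).
  lia.
Qed.

Lemma offset_cl c : (c < m)%nat -> cl (offset c) <> 0.
Proof.
  intros Hc E. unfold offset in E. apply cl_sub_eq0 in E.
  rewrite <- (pre_walk c) in E by lia. apply cl_eq_iff in E as [t Ht].
  rewrite <- pre_equivariant in Ht. apply (f_equal (pre_inv c)) in Ht.
  rewrite !(proj1 (pre_inverse c _)) in Ht.
  destruct (step_spec c Hc) as [Hab _]. apply Hab.
  rewrite <- walk_cl, <- walk_S_cl by auto. symmetry. apply (cl_eq_shift _ _ t), Ht.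
Qed.

Definition inv_index (c : nat) : Z := inversion_position (offset c).

Lemma inv_index_spec c : (c < m)%nat ->
  0 <= inv_index c <= nz * (nz - 1) - 1 /\ inv_index c + 1 + inv_index c / (nz - 1) = offset c.
Proof. intros Hc. apply inversion_position_spec; [apply offset_range|apply offset_cl]; auto. Qed.

Definition skip (c : nat) : nat := S (Z.to_nat (inv_index c)).

Lemma skip_range c : (c < m)%nat -> (1 <= skip c <= lam_len)%nat.
Proof. intros Hc. pose proof (inv_index_spec c Hc). pose proof lam_len_Z. unfold skip. lia. Qed.

Lemma skip_lt c1 c2 : (c1 < c2 < m)%nat -> (skip c1 < skip c2)%nat.
Proof.
  intros H12. apply Nat2Z.inj_lt. revert c1 c2 H12. apply lt_chain. intros c Hc.
  destruct (inv_index_spec c ltac:(lia)) as [A1 A2]. destruct (inv_index_spec (S c) Hc) as [B1 B2].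
  pose proof (offset_lt c Hc). unfold skip.
  destruct (Z.lt_ge_cases (inv_index c) (inv_index (S c))) as [C|C]; [lia|].
  pose proof (inversion_mono (inv_index (S c)) (inv_index c) ltac:(lia)). lia.
Qed.

Definition skips : list nat := map skip (seq 0 m).

Definition skipword : list bool := map (fun j => existsb (Nat.eqb j) skips) (seq 1 lam_len).

Lemma in_skips j : existsb (Nat.eqb j) skips = true <-> exists c, (c < m)%nat /\ skip c = j.
Proof.
  unfold skips. rewrite existsb_exists. split.
  - intros [x [Hx Ex]]. apply in_map_iff in Hx as [c [<- Hc]]. apply in_seq in Hc.
    apply Nat.eqb_eq in Ex. exists c. split; [lia|auto].
  - intros [c [Hc <-]]. exists (skip c). split; [apply in_map, in_seq; lia|apply Nat.eqb_refl].
Qed.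

Lemma skipword_length : length skipword = lam_len.
Proof. unfold skipword. rewrite length_map, length_seq. reflexivity. Qed.

Lemma skipword_nth j : (j < lam_len)%nat -> nth j skipword false = existsb (Nat.eqb (S j)) skips.
Proof. intros Hj. unfold skipword. rewrite nth_map_seq by exact Hj. reflexivity. Qed.

Lemma skips_filter : filter (fun j => existsb (Nat.eqb j) skips) (seq 1 lam_len) = skips.
Proof.
  apply filter_seq_mem.
  - apply sorted_map_seq. intros i j Hij. apply skip_lt. lia.
  - intros t Ht. unfold skips in Ht. apply in_map_iff in Ht as [c [<- Hc]]. apply in_seq in Hc.
    pose proof (skip_range c ltac:(lia)). lia.
Qed.

Lemma conj_at_skip u c : (c < m)%nat ->
  (forall k, uprefix n u (Z.to_nat (inv_index c)) k =
             pre_inv c (lam_prefix (Z.to_nat (inv_index c)) k)) ->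
  feq (tinv n u (skip c)) (nth c r (fun k => k)).
Proof.
  intros Hc HU z. unfold tinv, skip. rewrite Nat.sub_succ, Nat.sub_0_r.
  set (j := Z.to_nat (inv_index c)) in *. rewrite sigma_S. set (i := Z.of_nat (j mod n)).
  rewrite (refl_conj (uprefix n u j) (uprefix_inv n u j) i (i + 1));
    [|apply uprefix_equivariant|apply uprefix_inverse|apply uprefix_inverse|apply cl_succ_neq].
  destruct (inv_index_spec c Hc) as [J1 J2].
  assert (Ej : Z.of_nat j = inv_index c) by lia.
  pose proof (cl_nat_mod j) as Hi. fold i in Hi. apply cl_eq_iff in Hi as [t Ht].
  rewrite !HU, Ht, Z.add_shuffle0, !lam_prefix_equivariant, !lam_prefix_closed,
    lam_prefix_formula_diag, lam_prefix_formula_succ, Ej, J2.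
  destruct walk_full as [_ [_ A0]]. rewrite <- (cl_small 0) in A0 by (pose proof nz_ge2; lia).
  apply cl_eq_iff in A0 as [t0 Ht0].
  unfold offset.
  replace (0 + t * nz) with (pre c (walk c) + (t - t0) * nz) by (rewrite pre_walk by lia; lia).
  replace (pre c (walk (S c)) - a 0 + t * nz) with (pre c (walk (S c)) + (t - t0) * nz) by lia.
  rewrite !pre_inv_equivariant, !(proj1 (pre_inverse c _)).
  destruct (step_spec c Hc) as [_ [_ Hr]]. rewrite Hr.
  symmetry. apply refl_translate.
  - rewrite <- walk_cl by auto. symmetry. apply (cl_eq_shift _ _ (t - t0)). lia.
  - simpl. unfold width. lia.
Qed.

(* [skip_bound c] is the position of the c-th skip, with sentinels 0 and [lam_len + 1]. *)
Definition skip_bound (c : nat) : nat :=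
  match c with O => O | S c' => if (c' <? m)%nat then skip c' else S lam_len end.

Lemma skip_bound_S c : (c < m)%nat -> skip_bound (S c) = skip c.
Proof. intros Hc. unfold skip_bound. rewrite (proj2 (Nat.ltb_lt _ _) Hc). reflexivity. Qed.

Lemma skip_bound_lt c1 c2 : (c1 < c2 <= S m)%nat -> (skip_bound c1 < skip_bound c2)%nat.
Proof.
  intros H12. apply Nat2Z.inj_lt.
  apply (lt_chain (fun c => Z.of_nat (skip_bound c)) (S (S m))); [intros c Hc|lia].
  apply Nat2Z.inj_lt. destruct c as [|c].
  - rewrite skip_bound_S by lia. pose proof (skip_range 0 ltac:(lia)). simpl (skip_bound 0). lia.
  - rewrite skip_bound_S by lia. destruct (Nat.ltb_spec (S c) m) as [H|H].
    + rewrite skip_bound_S by exact H. apply skip_lt. lia.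
    + unfold skip_bound. rewrite (proj2 (Nat.ltb_ge _ _) H).
      pose proof (skip_range c ltac:(lia)). lia.
Qed.

Lemma uprefix_skipword j : (j <= lam_len)%nat -> forall c, (c <= m)%nat ->
  (skip_bound c <= j < skip_bound (S c))%nat ->
  forall k, uprefix n skipword j k = pre_inv c (lam_prefix j k).
Proof.
  induction j as [|j IH]; intros Hj c Hc [H1 H2] k.
  - destruct c as [|c]; [reflexivity|].
    pose proof (skip_bound_lt 0 (S c) ltac:(lia)). simpl in *. lia.
  - rewrite uprefix_S by lia. unfold letter. rewrite Nat.sub_succ, Nat.sub_0_r, skipword_nth by lia.
    destruct (Nat.eq_dec (skip_bound c) (S j)) as [E|E].
    + destruct c as [|c]; [simpl in E; lia|].
      rewrite skip_bound_S in E by lia.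
      rewrite (proj2 (in_skips (S j))) by (exists c; split; [lia|exact E]).
      assert (IHj : forall k, uprefix n skipword j k = pre_inv c (lam_prefix j k)).
      { apply IH; [lia|lia|]. pose proof (skip_bound_lt c (S c) ltac:(lia)).
        rewrite skip_bound_S in * by lia. lia. }
      assert (Jj : j = Z.to_nat (inv_index c)) by (unfold skip in E; lia).
      rewrite pre_inv_S, lam_prefix_S, <- IHj by lia.
      rewrite <- (conj_at_skip skipword c) by (try lia; rewrite <- Jj; exact IHj).
      unfold tinv. rewrite E, Nat.sub_succ, Nat.sub_0_r, (proj2 (uprefix_inverse _ _ _)).
      rewrite sigma_involution. reflexivity.
    + replace (existsb (Nat.eqb (S j)) skips) with false.
      * rewrite (IH ltac:(lia) c Hc ltac:(lia)), lam_prefix_S. reflexivity.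
      * symmetry. apply Bool.not_true_iff_false. intros Hin. apply in_skips in Hin as [c' [Hc' Hs]].
        rewrite <- skip_bound_S in Hs by exact Hc'.
        destruct (Nat.lt_trichotomy (S c') c) as [C|[C|C]].
        -- pose proof (skip_bound_lt (S c') c ltac:(lia)). lia.
        -- congruence.
        -- destruct (Nat.eq_dec c' c) as [->|C']; [lia|].
           pose proof (skip_bound_lt (S c) (S c') ltac:(lia)). lia.
Qed.

Lemma skipword_in_Sn : in_Sn n skipword.
Proof.
  split; [|split].
  - apply skipword_length.
  - unfold skipword. rewrite filter_map_swap, length_map, skips_filter.
    unfold skips. rewrite length_map, length_seq. reflexivity.
  - intros k.
    rewrite <- (firstn_all2 (n := lam_len) (letters n skipword)) by (rewrite letters_length; lia).
    change (uprefix n skipword lam_len k = k).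
    assert (Hlast : skip_bound m = skip (m - 1)) by (rewrite <- skip_bound_S by lia; f_equal; lia).
    rewrite (uprefix_skipword lam_len (le_n _) m (le_n _)).
    + rewrite lam_prefix_closed, lam_len_Z, lam_prefix_formula_full, <- pre_full.
      apply pre_inverse.
    + unfold skip_bound at 2. rewrite Nat.ltb_irrefl, Hlast.
      pose proof (skip_range (m - 1) ltac:(lia)). lia.
Qed.

Lemma skipword_reflections : Forall2 feq r (r_of n skipword).
Proof.
  assert (Hr : r_of n skipword = map (fun c => tinv n skipword (skip c)) (seq 0 m)).
  { unfold r_of. rewrite (filter_ext_in _ (fun j => existsb (Nat.eqb j) skips)), skips_filter.
    - unfold skips. rewrite map_map. reflexivity.
    - intros j Hj. apply in_seq in Hj. replace j with (S (j - 1)) at 2 by lia.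
      apply skipword_nth. lia. }
  rewrite Hr, (map_nth_seq_self r (fun k => k)), r_length.
  apply Forall2_map_seq. intros c Hc k. symmetry. apply conj_at_skip; [lia|].
  pose proof (skip_range c ltac:(lia)). pose proof (skip_bound_lt c (S c) ltac:(lia)).
  apply uprefix_skipword; rewrite ?skip_bound_S in * by lia; unfold skip in *; lia.
Qed.

End CyclicFactorization.
End AffinePermutations.

Theorem proposition5p18 (n : nat) (r : list (Z -> Z)) :
  (2 <= n)%nat -> is_fact n r -> cyclic n r ->
  exists u : list bool, in_Sn n u /\ Forall2 feq r (r_of n u).
Proof.
  intros Hn [Hlen [_ Hprod]] [a [b [Htree [Hsorted Hcyc]]]].
  exists (skipword n r a b). split.
  - exact (skipword_in_Sn n Hn r a b Hlen Hprod Htree Hsorted Hcyc).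
  - exact (skipword_reflections n Hn r a b Hlen Hprod Htree Hsorted Hcyc).
Qed.
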